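(* Let $V$ be a real vector space with an inner product of signature $(p,q)$ where $p\ge2$ and $q\ge2$. Then: (1) There exists an algebraic curvature tensor $R$ on $V$ which has spacelike rank $2$ but which does not have constant timelike rank nor constant mixed rank. (2) There exists an algebraic curvature tensor $R$ on $V$ which has timelike rank $2$ but which does not have constant spacelike rank nor constant mixed rank. (3) There exists an algebraic curvature tensor $R$ on $V$ which has spacelike rank $2$ and timelike rank $2$ but which does not have constant mixed rank.
   Context: An inner product of signature $(p,q)$ is a non-degenerate symmetric bilinear form $(\cdot,\cdot)$ whose maximal negative definite subspaces have dimension $p$ and maximal positive definite subspaces dimension $q$. A $2$-plane $\pi$ is spacelike (resp. timelike, mixed) if the induced form on $\pi$ has signature $(0,2)$ (resp. $(2,0)$, $(1,1)$). An algebraic curvature tensor is $R\in\otimes^4V^*$ with $R(x,y,z,w)=R(z,w,x,y)=-R(y,x,z,w)$ and $R(x,y,z,w)+R(y,z,x,w)+R(z,x,y,w)=0$; the operator $R(x,y)$ is defined by $R(x,y,z,w)=(R(x,y)z,w)$. For a non-degenerate $2$-plane $\pi$ with oriented basis $\{e_1,e_2\}$, $R(\pi):=|(e_1,e_1)(e_2,e_2)-(e_1,e_2)^2|^{-1/2}R(e_1,e_2)$. $R$ has spacelike rank $r$ if $\operatorname{rank}R(\pi)=r$ for every oriented spacelike $2$-plane $\pi$; timelike rank $r$ and mixed rank $r$ are defined analogously using timelike, resp. mixed, $2$-planes. $R$ has constant timelike (mixed) rank if it has timelike (mixed) rank $r$ for some $r$. *)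

From HB Require Import structures.
From mathcomp Require Import all_boot all_order all_algebra.
From mathcomp Require Import reals.
Set Implicit Arguments. Unset Strict Implicit. Unset Printing Implicit Defensive.
Import Order.TTheory GRing.Theory Num.Theory.
Local Open Scope ring_scope.

Section Defs.
Variable R : realType.

Definition form (k : nat) (G : 'M[R]_k) (u v : 'rV[R]_k) : R := (u *m G *m v^T) 0 0.

Definition neg_def_on (k m : nat) (G : 'M[R]_k) (U : 'M[R]_(m, k)) : Prop :=
  forall v : 'rV[R]_k, (v <= U)%MS -> v != 0 -> form G v v < 0.
Definition pos_def_on (k m : nat) (G : 'M[R]_k) (U : 'M[R]_(m, k)) : Prop :=
  forall v : 'rV[R]_k, (v <= U)%MS -> v != 0 -> 0 < form G v v.

Definition has_signature (k : nat) (G : 'M[R]_k) (p q : nat) : Prop :=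
  [/\ G \in unitmx,
      exists U : 'M[R]_(p, k), row_free U /\ neg_def_on G U,
      forall m (U : 'M[R]_(m, k)), neg_def_on G U -> (\rank U <= p)%N,
      exists U : 'M[R]_(q, k), row_free U /\ pos_def_on G U &
      forall m (U : 'M[R]_(m, k)), pos_def_on G U -> (\rank U <= q)%N].

Definition multilinear4 (n : nat) (T : 'rV[R]_n -> 'rV[R]_n -> 'rV[R]_n -> 'rV[R]_n -> R) : Prop :=
  [/\ forall a x x' y z w, T (a *: x + x') y z w = a * T x y z w + T x' y z w,
      forall a x y y' z w, T x (a *: y + y') z w = a * T x y z w + T x y' z w,
      forall a x y z z' w, T x y (a *: z + z') w = a * T x y z w + T x y z' w &
      forall a x y z w w', T x y z (a *: w + w') = a * T x y z w + T x y z w'].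

Definition is_ACT (n : nat) (T : 'rV[R]_n -> 'rV[R]_n -> 'rV[R]_n -> 'rV[R]_n -> R) : Prop :=
  [/\ multilinear4 T,
      forall x y z w, T x y z w = T z w x y,
      forall x y z w, T x y z w = - T y x z w &
      forall x y z w, T x y z w + T y z x w + T z x y w = 0].

(* Matrix (acting on row vectors z |-> z *m A) of the operator R(x,y), defined by
   R(x,y,z,w) = (R(x,y)z, w); namely A = M G^{-1} with M_ij = R(x,y,e_i,e_j). *)
Definition curv_op (n : nat) (G : 'M[R]_n)
  (T : 'rV[R]_n -> 'rV[R]_n -> 'rV[R]_n -> 'rV[R]_n -> R) (x y : 'rV[R]_n) : 'M[R]_n :=
  (\matrix_(i < n, j < n) T x y (delta_mx 0 i) (delta_mx 0 j)) *m invmx G.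

Definition curv_plane (n : nat) (G : 'M[R]_n)
  (T : 'rV[R]_n -> 'rV[R]_n -> 'rV[R]_n -> 'rV[R]_n -> R) (E : 'M[R]_(2, n)) : 'M[R]_n :=
  let e1 := row 0 E in let e2 := row 1 E in
  (Num.sqrt `|form G e1 e1 * form G e2 e2 - form G e1 e2 ^+ 2|)^-1 *: curv_op G T e1 e2.

Definition has_plane_rank (n : nat) (G : 'M[R]_n)
  (T : 'rV[R]_n -> 'rV[R]_n -> 'rV[R]_n -> 'rV[R]_n -> R) (a b r : nat) : Prop :=
  forall E : 'M[R]_(2, n), row_free E -> has_signature (E *m G *m E^T) a b ->
    \rank (curv_plane G T E) = r.

Definition spacelike_rank n G T r := @has_plane_rank n G T 0 2 r.
Definition timelike_rank n G T r := @has_plane_rank n G T 2 0 r.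
Definition mixed_rank n G T r := @has_plane_rank n G T 1 1 r.
Definition const_timelike_rank n G T := exists r, @timelike_rank n G T r.
Definition const_mixed_rank n G T := exists r, @mixed_rank n G T r.
Definition const_spacelike_rank n G T := exists r, @spacelike_rank n G T r.

End Defs.

(* For a symmetric matrix S, R_S(x,y,z,w) = S(x,w) S(y,z) - S(x,z) S(y,w) is an algebraic
   curvature tensor, and on a plane with basis e1, e2 the operator R_S(e1,e2) is, up to
   invertible factors, the wedge (S e1) ∧ (S e2).  If the kernel of S is the line spanned
   by a vector k, then R_S(π) has rank 2 when k ∉ π and rank 0 when k ∈ π.  A vector k
   with (k,k) <= 0 lies in no spacelike plane, and one with (k,k) >= 0 in no timelike
   plane.  Conversely, from an orthonormal frame t1, t2, s1, s2 (which exists as p, q >= 2)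
   one builds planes of each relevant type both through k and avoiding k.  The choices
   k = t1, k = s1 and the null vector k = t1 + s1 give the three statements. *)

From Pilot Require Import Defs.
From HB Require Import structures.
From mathcomp Require Import all_boot all_order all_algebra.
From mathcomp Require Import reals ring lra.
Set Implicit Arguments. Unset Strict Implicit. Unset Printing Implicit Defensive.
Import Order.TTheory GRing.Theory Num.Theory.
Local Open Scope ring_scope.

(* [all_algebra] also exports a [form], from sesquilinear.v. *)
Local Notation form := Defs.form.

Lemma det_mx22 (R : comPzRingType) (A : 'M[R]_2) :
  \det A = A 0 0 * A 1 1 - A 0 1 * A 1 0.
Proof.
rewrite (expand_det_row _ 0) !big_ord_recl big_ord0 /cofactor !det_mx11 !mxE /=.
rewrite addr0 expr0 expr1 mul1r mulN1r mulrN.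
by congr (_ * _ - _ * _); congr (A _ _); apply: val_inj.
Qed.

Section Forms.
Variables (R : realType) (n : nat).
Implicit Types (G : 'M[R]_n) (x y z : 'rV[R]_n).

Lemma formDl G x y z : form G (x + y) z = form G x z + form G y z.
Proof. by rewrite /form !mulmxDl mxE. Qed.

Lemma formDr G x y z : form G x (y + z) = form G x y + form G x z.
Proof. by rewrite /form linearD /= mulmxDr mxE. Qed.

Lemma formZl G a x y : form G (a *: x) y = a * form G x y.
Proof. by rewrite /form -!scalemxAl mxE. Qed.

Lemma formZr G a x y : form G x (a *: y) = a * form G x y.
Proof. by rewrite /form linearZ /= -scalemxAr mxE. Qed.

Lemma formNl G x y : form G (- x) y = - form G x y.
Proof. by rewrite -scaleN1r formZl mulN1r. Qed.

Lemma form0l G y : form G 0 y = 0.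
Proof. by rewrite /form !mul0mx mxE. Qed.

Lemma form_neq0l G x y : form G x y != 0 -> x != 0.
Proof. by apply: contraNneq => ->; rewrite form0l. Qed.

Lemma formN G x y : form (- G) x y = - form G x y.
Proof. by rewrite /form mulmxN mulNmx mxE. Qed.

Lemma form_sym G x y : G^T = G -> form G x y = form G y x.
Proof.
move=> sG; rewrite /form -[in LHS]sG.
have -> : x *m G^T *m y^T = (y *m G *m x^T)^T by rewrite !trmx_mul trmxK mulmxA.
by rewrite mxE.
Qed.

Lemma form_delta G x j : form G x (delta_mx 0 j) = (x *m G) 0 j.
Proof. by rewrite /form trmx_delta -colE mxE. Qed.

Lemma form_gram m G (E : 'M_(m, n)) (v w : 'rV_m) :
  form (E *m G *m E^T) v w = form G (v *m E) (w *m E).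
Proof. by rewrite /form trmx_mul !mulmxA. Qed.

Lemma gram_mxE m G (E : 'M_(m, n)) i j :
  (E *m G *m E^T) i j = form G (row i E) (row j E).
Proof. by rewrite /form -row_mul !mxE; apply: eq_bigr => k _; rewrite !mxE. Qed.

Lemma mul_trmx_self_eq0 (u : 'rV[R]_n) : ((u *m u^T) 0 0 == 0) = (u == 0).
Proof.
apply/idP/eqP => [|->]; last by rewrite mul0mx mxE.
rewrite mxE => /eqP u0; apply/rowP => j; apply/eqP; rewrite mxE -sqrf_eq0.
have sq_ge0 i : true -> 0 <= u 0 i * u^T i 0 by rewrite mxE -expr2 sqr_ge0.
by have := psumr_eq0P sq_ge0 u0 (i := j) isT; rewrite mxE -expr2 => ->.
Qed.

End Forms.

Section Signature.
Variables (R : realType) (k : nat).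
Implicit Types (M : 'M[R]_k) (v : 'rV[R]_k).

Lemma neg_def_onN m M (U : 'M_(m, k)) : neg_def_on (- M) U <-> pos_def_on M U.
Proof. by split=> defU v vU v0; move: (defU v vU v0); rewrite formN oppr_lt0. Qed.

Lemma pos_def_onN m M (U : 'M_(m, k)) : pos_def_on (- M) U <-> neg_def_on M U.
Proof. by split=> defU v vU v0; move: (defU v vU v0); rewrite formN oppr_gt0. Qed.

Lemma has_signatureN M p q : has_signature M p q -> has_signature (- M) q p.
Proof.
case=> uM [U [fU negU]] maxU [W [fW posW]] maxW; split.
- by rewrite -scaleN1r unitmxZ ?unitrN1.
- by exists W; split=> //; apply/neg_def_onN.
- by move=> m V /neg_def_onN; apply: maxW.
- by exists U; split=> //; apply/pos_def_onN.
- by move=> m V /pos_def_onN; apply: maxU.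
Qed.

Lemma has_signature_pos_def M :
  (forall v, v != 0 -> 0 < form M v v) -> has_signature M 0 k.
Proof.
move=> posM; split.
- rewrite -row_free_unit; apply: inj_row_free => v vM0; apply: contraTeq isT => v0.
  by have := posM v v0; rewrite /form vM0 mul0mx mxE ltxx.
- exists 0; split; first by rewrite /row_free mxrank0.
  by move=> v /mxrankS; rewrite mxrank0 leqn0 mxrank_eq0 => /eqP->; rewrite eqxx.
- move=> m U negU; rewrite leqn0 mxrank_eq0; apply/eqP/row_matrixP => i.
  rewrite row0; apply: contraTeq isT => ri0.
  by have := negU _ (row_sub i U) ri0; have := posM _ ri0; lra.
- by exists 1%:M; split=> [|v _]; [rewrite row_free_unit unitmx1 | apply: posM].
- by move=> m U _; apply: rank_leq_col.
Qed.

Lemma pos_def_of_signature M v : has_signature M 0 k -> v != 0 -> 0 < form M v v.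
Proof.
case=> _ _ _ [U [fU posU]] _ v0; apply: posU v0.
by apply: submx_full; rewrite row_full_unit -row_free_unit.
Qed.

Lemma neg_def_of_signature M v : has_signature M k 0 -> v != 0 -> form M v v < 0.
Proof.
by move=> /has_signatureN sigM v0; have := pos_def_of_signature sigM v0; rewrite formN oppr_gt0.
Qed.

Lemma neg_def_on_rV M a : form M a a < 0 -> row_free a /\ neg_def_on M a.
Proof.
move=> aa; have a0 : a != 0 by apply: form_neq0l (ltr0_neq0 aa).
split; first by rewrite /row_free rank_rV a0.
move=> v /sub_rVP [c ->]; rewrite scaler_eq0 negb_or => /andP [c0 _].
by rewrite formZl formZr mulrA pmulr_rlt0 // -expr2 exprn_even_gt0.
Qed.

Lemma neg_def_on_rank_lt m M (U : 'M_(m, k)) b :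
  0 < form M b b -> neg_def_on M U -> (\rank U < k)%N.
Proof.
move=> bb negU; rewrite ltn_neqAle rank_leq_col andbT; apply/negP => fullU.
by have := negU b (submx_full _ fullU) (form_neq0l (lt0r_neq0 bb)); lra.
Qed.

End Signature.

Lemma has_signature11 (R : realType) (M : 'M[R]_2) a b :
  M \in unitmx -> form M a a < 0 -> 0 < form M b b -> has_signature M 1 1.
Proof.
move=> uM aa bb; have bb' : form (- M) b b < 0 by rewrite formN oppr_lt0.
have aa' : 0 < form (- M) a a by rewrite formN oppr_gt0.
split=> //.
- by exists a; apply: neg_def_on_rV.
- by move=> m U; apply: neg_def_on_rank_lt bb.
- by have [fb negb] := neg_def_on_rV bb'; exists b; split=> //; apply/neg_def_onN.
- by move=> m U /neg_def_onN; apply: neg_def_on_rank_lt aa'.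
Qed.

Section Planes.
Variables (R : realType) (n : nat) (G : 'M[R]_n).
Hypothesis sG : G^T = G.
Implicit Types (x y u : 'rV[R]_n) (E : 'M[R]_(2, n)).

Lemma gram_det2 E : \det (E *m G *m E^T) =
  form G (row 0 E) (row 0 E) * form G (row 1 E) (row 1 E) - form G (row 0 E) (row 1 E) ^+ 2.
Proof. by rewrite det_mx22 !gram_mxE (form_sym _ _ sG) expr2. Qed.

Lemma row_free_of_gram m (E : 'M_(m, n)) : E *m G *m E^T \in unitmx -> row_free E.
Proof.
rewrite -row_free_unit => /eqP rkG; rewrite /row_free eqn_leq rank_leq_row /=.
by rewrite -[X in (X <= _)%N]rkG -mulmxA mxrankM_maxl.
Qed.

Definition plane_mx x y : 'M[R]_(2, n) := \matrix_i (if i == 0 then x else y).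

Lemma plane_mx_row0 x y : row 0 (plane_mx x y) = x.
Proof. by rewrite rowK. Qed.

Lemma plane_mx_row1 x y : row 1 (plane_mx x y) = y.
Proof. by rewrite rowK. Qed.

Lemma mul_plane_mx x y (v : 'rV_2) : v *m plane_mx x y = v 0 0 *: x + v 0 1 *: y.
Proof.
rewrite mulmx_sum_row !big_ord_recl big_ord0 addr0 plane_mx_row0 rowK /=.
by congr (_ + v 0 _ *: _); apply: val_inj.
Qed.

Lemma plane_mx_subP x y u :
  reflect (exists a b, u = a *: x + b *: y) (u <= plane_mx x y)%MS.
Proof.
apply: (iffP idP) => [/submxP [v ->] | [a [b ->]]].
  by exists (v 0 0), (v 0 1); rewrite mul_plane_mx.
apply: addmx_sub; apply: scalemx_sub.
  by rewrite -{1}(plane_mx_row0 x y) row_sub.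
by rewrite -{1}(plane_mx_row1 x y) row_sub.
Qed.

Lemma rV2_eq0 (v : 'rV[R]_2) : (v == 0) = (v 0 0 == 0) && (v 0 1 == 0).
Proof.
apply/eqP/andP => [-> | [/eqP v0 /eqP v1]]; first by rewrite !mxE eqxx.
apply/rowP => j; rewrite mxE; case: j => [[|[|//]] lt_j]; [rewrite -v0 | rewrite -v1];
  by congr (v 0 _); apply: val_inj.
Qed.

Lemma has_signature_plane_pos x y : form G x y = 0 -> 0 < form G x x -> 0 < form G y y ->
  has_signature (plane_mx x y *m G *m (plane_mx x y)^T) 0 2.
Proof.
move=> xy xx yy; apply: has_signature_pos_def => v.
rewrite form_gram mul_plane_mx formDl !formDr !formZl !formZr (form_sym y x sG) xy.
rewrite rV2_eq0 negb_and => nz.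
have sqr_gt0 (c : R) : c != 0 -> 0 < c ^+ 2 by move=> c0; rewrite lt0r sqrf_eq0 c0 sqr_ge0.
have := sqr_ge0 (v 0 0); have := sqr_ge0 (v 0 1).
by case/orP: nz => /sqr_gt0; rewrite !expr2; nra.
Qed.

Lemma has_signature_plane11 x y a b c d :
  form G x x * form G y y - form G x y ^+ 2 != 0 ->
  form G (a *: x + b *: y) (a *: x + b *: y) < 0 ->
  0 < form G (c *: x + d *: y) (c *: x + d *: y) ->
  has_signature (plane_mx x y *m G *m (plane_mx x y)^T) 1 1.
Proof.
move=> det0; have /submxP [u ->] : ((a *: x + b *: y)%R <= plane_mx x y)%MS.
  by apply/plane_mx_subP; exists a, b.
have /submxP [w ->] : ((c *: x + d *: y)%R <= plane_mx x y)%MS.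
  by apply/plane_mx_subP; exists c, d.
rewrite -!form_gram; apply: has_signature11.
by rewrite unitmxE gram_det2 plane_mx_row0 plane_mx_row1 unitfE.
Qed.

End Planes.

Lemma has_signature_plane_neg (R : realType) n (G : 'M[R]_n) x y : G^T = G ->
  form G x y = 0 -> form G x x < 0 -> form G y y < 0 ->
  has_signature (plane_mx x y *m G *m (plane_mx x y)^T) 2 0.
Proof.
move=> sG xy xx yy; have sNG : (- G)^T = - G by rewrite linearN /= sG.
have := has_signature_plane_pos sNG (x := x) (y := y).
rewrite !formN xy oppr0 !oppr_gt0 => /(_ erefl xx yy).
by rewrite mulmxN mulNmx => /has_signatureN; rewrite opprK.
Qed.

Section CanonicalCurvature.
Variables (R : realType) (n : nat).
Implicit Types (G S : 'M[R]_n) (x y z w k : 'rV[R]_n) (E : 'M[R]_(2, n)).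

Definition curv_canon S x y z w := form S x w * form S y z - form S x z * form S y w.

Lemma curv_canon_ACT S : S^T = S -> is_ACT (curv_canon S).
Proof.
move=> sS; have symS := form_sym _ _ sS; split.
- by split=> *; rewrite /curv_canon ?formDl ?formDr ?formZl ?formZr; ring.
- by move=> x y z w; rewrite /curv_canon (symS z y) (symS w x) (symS z x) (symS w y); ring.
- by move=> x y z w; rewrite /curv_canon; ring.
- by move=> x y z w; rewrite /curv_canon (symS z x) (symS y x) (symS z y); ring.
Qed.

Definition skew2 : 'M[R]_2 := delta_mx 1 0 - delta_mx 0 1.

Lemma skew2_unit : skew2 \in unitmx.
Proof.
rewrite unitmxE det_mx22 !mxE /=.
by rewrite unitfE; apply/eqP; lra.
Qed.

Lemma curv_canon_mx S E :
  \matrix_(i, j) curv_canon S (row 0 E) (row 1 E) (delta_mx 0 i) (delta_mx 0 j)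
  = (E *m S)^T *m (skew2 *m (E *m S)).
Proof.
apply/matrixP => i j; rewrite mxE /curv_canon !form_delta -!row_mul.
rewrite !mxE !big_ord_recl !big_ord0 !mxE /= !big_ord_recl !big_ord0 !mxE /=.
have -> : lift ord0 ord0 = 1 :> 'I_2 by apply: val_inj.
ring.
Qed.

Lemma rank_curv_plane_canon G S E : G^T = G -> G \in unitmx ->
  E *m G *m E^T \in unitmx -> row_free (E *m S) ->
  \rank (curv_plane G (curv_canon S) E) = 2%N.
Proof.
move=> sG uG uE fES; rewrite /curv_plane /=.
have scale_neq0 : (Num.sqrt `|form G (row 0 E) (row 0 E) * form G (row 1 E) (row 1 E)
                                 - form G (row 0 E) (row 1 E) ^+ 2|)^-1 != 0.
  by rewrite invr_eq0 sqrtr_eq0 -ltNge normr_gt0 -(gram_det2 sG) -unitfE -unitmxE.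
rewrite (eqmx_scale _ scale_neq0) /curv_op mxrankMfree ?row_free_unit ?unitmx_inv //.
rewrite curv_canon_mx mxrankMfree ?mxrank_tr; first exact/eqP.
by rewrite /row_free eqmxMfull ?row_full_unit ?skew2_unit.
Qed.

Lemma rank_curv_plane_canon0 G S E : row 0 E *m S = 0 ->
  \rank (curv_plane G (curv_canon S) E) = 0%N.
Proof.
move=> ES0; rewrite /curv_plane /curv_op.
have -> : \matrix_(i, j) curv_canon S (row 0 E) (row 1 E) (delta_mx 0 i) (delta_mx 0 j) = 0.
  by apply/matrixP => i j; rewrite !mxE /curv_canon !form_delta ES0 !mxE; ring.
by rewrite mul0mx scaler0 mxrank0.
Qed.

(* Euclidean rather than [G]-orthogonal, so that its kernel is the line spanned by [k]
   even when [k] is null. *)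
Definition perp_proj k : 'M[R]_n := 1%:M - ((k *m k^T) 0 0)^-1 *: (k^T *m k).

Lemma trmx_perp_proj k : (perp_proj k)^T = perp_proj k.
Proof. by rewrite /perp_proj linearB /= linearZ /= trmx1 trmx_mul trmxK. Qed.

Lemma mul_perp_proj k x : x *m perp_proj k = x - ((x *m k^T) 0 0 / (k *m k^T) 0 0) *: k.
Proof.
rewrite /perp_proj mulmxBr mulmx1 -scalemxAr mulmxA [x *m k^T]mx11_scalar mul_scalar_mx.
by rewrite scalerA mulrC -mx11_scalar.
Qed.

Lemma mul_perp_proj_self k : k != 0 -> k *m perp_proj k = 0.
Proof.
by move=> k0; rewrite mul_perp_proj divff ?mul_trmx_self_eq0 // scale1r subrr.
Qed.

Lemma row_free_mul_perp_proj m (E : 'M_(m, n)) k :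
  row_free E -> ~~ (k <= E)%MS -> row_free (E *m perp_proj k).
Proof.
move=> fE kE; apply: inj_row_free => v; rewrite mulmxA mul_perp_proj => /eqP.
rewrite subr_eq0 => /eqP vEk; apply/eqP; rewrite -(mulmx_free_eq0 _ fE) vEk scaler_eq0.
apply/orP; left; apply: contraR kE => c0.
by rewrite -(scalerK c0 k) -vEk scalemx_sub ?submxMl.
Qed.

Definition curv_perp k := curv_canon (perp_proj k).

Lemma curv_perp_ACT k : is_ACT (curv_perp k).
Proof. exact/curv_canon_ACT/trmx_perp_proj. Qed.

End CanonicalCurvature.

Section PerpCurvatureRank.
Variables (R : realType) (n : nat) (G : 'M[R]_n).
Hypotheses (sG : G^T = G) (uG : G \in unitmx).
Implicit Types (k : 'rV[R]_n) (E : 'M[R]_(2, n)).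

Lemma rank_curv_perp2 k E : row_free E -> E *m G *m E^T \in unitmx -> ~~ (k <= E)%MS ->
  \rank (curv_plane G (curv_perp k) E) = 2%N.
Proof.
by move=> fE uE kE; apply: rank_curv_plane_canon => //; apply: row_free_mul_perp_proj.
Qed.

Lemma rank_curv_perp0 k E : k != 0 -> row 0 E = k -> \rank (curv_plane G (curv_perp k) E) = 0%N.
Proof. by move=> k0 E0k; apply: rank_curv_plane_canon0; rewrite E0k mul_perp_proj_self. Qed.

Lemma sub_gram_form m k (E : 'M_(m, n)) : k != 0 -> (k <= E)%MS ->
  exists2 v, v != 0 & form (E *m G *m E^T) v v = form G k k.
Proof.
move=> k0 /submxP [v kE]; exists v; last by rewrite form_gram kE.
by apply: contraNneq k0 => v0; rewrite kE v0 mul0mx.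
Qed.

Lemma spacelike_rank_curv_perp k : k != 0 -> form G k k <= 0 ->
  spacelike_rank G (curv_perp k) 2.
Proof.
move=> k0 kk E fE sigE; apply: rank_curv_perp2 => //; first by case: sigE.
apply/negP => /(sub_gram_form k0) [v v0 vE].
by have := pos_def_of_signature sigE v0; rewrite vE; lra.
Qed.

Lemma timelike_rank_curv_perp k : k != 0 -> 0 <= form G k k ->
  timelike_rank G (curv_perp k) 2.
Proof.
move=> k0 kk E fE sigE; apply: rank_curv_perp2 => //; first by case: sigE.
apply/negP => /(sub_gram_form k0) [v v0 vE].
by have := neg_def_of_signature sigE v0; rewrite vE; lra.
Qed.

Lemma curv_perp_not_const k a b E0 E1 :
  row 0 E0 = k -> has_signature (E0 *m G *m E0^T) a b ->
  has_signature (E1 *m G *m E1^T) a b -> ~~ (k <= E1)%MS ->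
  ~ exists r, has_plane_rank G (curv_perp k) a b r.
Proof.
move=> E0k sig0 sig1 kE1 [r rk].
have k0 : k != 0 by apply: contraNneq kE1 => ->; rewrite sub0mx.
have uE0 : E0 *m G *m E0^T \in unitmx by case: sig0.
have uE1 : E1 *m G *m E1^T \in unitmx by case: sig1.
have := rk E0 (row_free_of_gram uE0) sig0; rewrite rank_curv_perp0 // => r0.
have fE1 := row_free_of_gram uE1.
by have := rk E1 fE1 sig1; rewrite rank_curv_perp2 // -r0.
Qed.

End PerpCurvatureRank.

Lemma row_free_rowBZ_neq0 (R : fieldType) m n (U : 'M[R]_(m, n)) i j c :
  row_free U -> i != j -> row j U - c *: row i U != 0.
Proof.
move=> fU ij; rewrite !rowE scalemxAl -mulmxBl mulmx_free_eq0 //.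
apply/eqP => /matrixP /(_ 0 j); rewrite !mxE !eqxx eq_sym (negbTE ij) /=.
by rewrite mulr0 subr0 => /eqP; rewrite oner_eq0.
Qed.

Section DefiniteFrame.
Variables (R : realType) (n : nat) (G : 'M[R]_n).
Hypothesis sG : G^T = G.
Implicit Types (x : 'rV[R]_n).

Definition normalize x := (Num.sqrt (form G x x))^-1 *: x.

Lemma form_normalize x : 0 < form G x x -> form G (normalize x) (normalize x) = 1.
Proof.
move=> xx; rewrite /normalize formZl formZr mulrA -expr2 exprVn sqr_sqrtr ?ltW //.
by rewrite mulVf // lt0r_neq0.
Qed.

Lemma pos_def_frame m (U : 'M_(m, n)) : (1 < m)%N -> row_free U -> pos_def_on G U ->
  exists e1 e2, [/\ form G e1 e1 = 1, form G e2 e2 = 1, form G e1 e2 = 0,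
                    (e1 <= U)%MS & (e2 <= U)%MS].
Proof.
move=> m_gt1 fU posU.
pose i0 : 'I_m := Ordinal (ltnW m_gt1); pose i1 : 'I_m := Ordinal m_gt1.
have u0_neq0 : row i0 U != 0.
  by have := @row_free_rowBZ_neq0 _ _ _ U i1 i0 0 fU isT; rewrite scale0r subr0.
pose e1 := normalize (row i0 U).
have e1U : (e1 <= U)%MS by rewrite scalemx_sub ?row_sub.
have e1e1 : form G e1 e1 = 1 by rewrite form_normalize // posU ?row_sub.
pose w := row i1 U - form G (row i1 U) e1 *: e1.
have w_neq0 : w != 0 by rewrite /w {2}/e1 /normalize scalerA row_free_rowBZ_neq0.
have wU : (w <= U)%MS by rewrite /w -scaleNr addmx_sub ?scalemx_sub ?row_sub.
have we1 : form G w e1 = 0 by rewrite /w formDl formNl formZl e1e1 mulr1 subrr.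
exists e1, (normalize w); split=> //; last by rewrite scalemx_sub.
  by rewrite form_normalize // posU.
by rewrite formZr (form_sym _ _ sG) we1 mulr0.
Qed.

End DefiniteFrame.

Section ProjectionOff.
Variables (R : realType) (n : nat) (G : 'M[R]_n) (t1 t2 : 'rV[R]_n).
Hypotheses (sG : G^T = G) (t11 : form G t1 t1 = -1) (t22 : form G t2 t2 = -1)
  (t12 : form G t1 t2 = 0).
Implicit Types (x : 'rV[R]_n).

(* The [G]-orthogonal projection onto the complement of [t1] and [t2]; as these are
   timelike it does not decrease [(x, x)], so it keeps positive definite subspaces
   positive definite. *)
Definition proj_off : 'M[R]_n := 1%:M + G *m t1^T *m t1 + G *m t2^T *m t2.

Lemma mul_proj_off x : x *m proj_off = x + form G x t1 *: t1 + form G x t2 *: t2.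
Proof.
rewrite /proj_off !mulmxDr mulmx1 !mulmxA [x *m G *m t1^T]mx11_scalar.
by rewrite [x *m G *m t2^T]mx11_scalar !mul_scalar_mx.
Qed.

Lemma form_proj_off_orth x : form G t1 (x *m proj_off) = 0 /\ form G t2 (x *m proj_off) = 0.
Proof.
have t21 : form G t2 t1 = 0 by rewrite form_sym.
rewrite (form_sym t1 _ sG) (form_sym t2 _ sG) mul_proj_off !formDl !formZl t11 t22 t12 t21.
by split; ring.
Qed.

Lemma form_proj_off x :
  form G (x *m proj_off) (x *m proj_off) = form G x x + form G x t1 ^+ 2 + form G x t2 ^+ 2.
Proof.
have [o1 o2] := form_proj_off_orth x.
rewrite {1}mul_proj_off !formDl !formZl (form_sym _ _ sG) o1 (form_sym _ _ sG) o2.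
by rewrite mul_proj_off !formDr !formZr; ring.
Qed.

Lemma pos_def_proj_off m (W : 'M_(m, n)) : row_free W -> pos_def_on G W ->
  row_free (W *m proj_off) /\ pos_def_on G (W *m proj_off).
Proof.
move=> fW posW.
have posWQ (v : 'rV_m) : v != 0 -> 0 < form G (v *m W *m proj_off) (v *m W *m proj_off).
  move=> v0; have vW0 : v *m W != 0 by rewrite mulmx_free_eq0.
  have := posW _ (submxMl v W) vW0; rewrite form_proj_off.
  by have := sqr_ge0 (form G (v *m W) t1); have := sqr_ge0 (form G (v *m W) t2); lra.
split.
  apply: inj_row_free => v; rewrite mulmxA => vWQ0; apply: contraTeq isT => v0.
  by have := posWQ v v0; rewrite vWQ0 form0l ltxx.
move=> x /submxP [v ->] x0; rewrite mulmxA posWQ //.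
by apply: contraNneq x0 => ->; rewrite !mul0mx.
Qed.

Lemma sub_proj_off_orth m (W : 'M_(m, n)) x : (x <= W *m proj_off)%MS ->
  form G t1 x = 0 /\ form G t2 x = 0.
Proof. by move=> /submxP [v ->]; rewrite mulmxA; apply: form_proj_off_orth. Qed.

End ProjectionOff.

Definition orthonormal_frame (R : realType) n (G : 'M[R]_n) (t1 t2 s1 s2 : 'rV[R]_n) :=
  [/\ [/\ form G t1 t1 = -1, form G t2 t2 = -1, form G s1 s1 = 1 & form G s2 s2 = 1],
      [/\ form G t1 t2 = 0, form G t1 s1 = 0 & form G t1 s2 = 0] &
      [/\ form G t2 s1 = 0, form G t2 s2 = 0 & form G s1 s2 = 0]].

Lemma orthonormal_frame_exists (R : realType) n (G : 'M[R]_n) p q : G^T = G ->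
  (1 < p)%N -> (1 < q)%N -> has_signature G p q ->
  exists t1 t2 s1 s2, orthonormal_frame G t1 t2 s1 s2.
Proof.
move=> sG p_gt1 q_gt1 [_ [U [fU negU]] _ [W [fW posW]] _].
have sNG : (- G)^T = - G by rewrite linearN /= sG.
have posNU : pos_def_on (- G) U by apply/pos_def_onN.
have [t1 [t2 []]] := pos_def_frame sNG p_gt1 fU posNU; rewrite !formN.
move=> /eqP; rewrite eqr_oppLR => /eqP t11 /eqP; rewrite eqr_oppLR => /eqP t22.
move=> /eqP; rewrite oppr_eq0 => /eqP t12 _ _.
have [fWQ posWQ] := pos_def_proj_off sG t11 t22 t12 fW posW.
have orthWQ := sub_proj_off_orth sG t11 t22 t12.
have [s1 [s2 [s11 s22 s12 /orthWQ [t1s1 t2s1] /orthWQ [t1s2 t2s2]]]] :=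
  pos_def_frame sG q_gt1 fWQ posWQ.
by exists t1, t2, s1, s2; split; split.
Qed.

Section Examples.
Variables (R : realType) (n : nat) (G : 'M[R]_n) (t1 t2 s1 s2 : 'rV[R]_n).
Hypotheses (sG : G^T = G) (uG : G \in unitmx) (frame : orthonormal_frame G t1 t2 s1 s2).

Let frameE : (((form G t1 t1 = -1) * (form G t2 t2 = -1) * (form G s1 s1 = 1)
    * (form G s2 s2 = 1)) * ((form G t1 t2 = 0) * (form G t1 s1 = 0) * (form G t1 s2 = 0)
    * (form G t2 s1 = 0) * (form G t2 s2 = 0) * (form G s1 s2 = 0))
    * ((form G t2 t1 = 0) * (form G s1 t1 = 0) * (form G s2 t1 = 0)
    * (form G s1 t2 = 0) * (form G s2 t2 = 0) * (form G s2 s1 = 0)))%type.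
Proof.
have fsym x y := form_sym x y sG.
case: frame => -[e11 e22 e33 e44] [e12 e13 e14] [e23 e24 e34].
rewrite (fsym t2 t1) (fsym s1 t1) (fsym s2 t1) (fsym s1 t2) (fsym s2 t2) (fsym s2 s1).
by rewrite e11 e22 e33 e44 e12 e13 e14 e23 e24 e34.
Qed.

Local Ltac frame_lra :=
  rewrite ?(formDl, formDr, formZl, formZr, frameE);
  lazymatch goal with |- is_true (_ != _) => apply/eqP => ?; lra | _ => lra end.

Local Ltac not_in_plane z1 z2 :=
  apply/plane_mx_subP => -[a [b kE]];
  have := congr1 (form G ^~ z1) kE; have := congr1 (form G ^~ z2) kE; rewrite /=; frame_lra.

Lemma curv_perp_timelike :
  [/\ is_ACT (curv_perp t1), spacelike_rank G (curv_perp t1) 2,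
      ~ const_timelike_rank G (curv_perp t1) & ~ const_mixed_rank G (curv_perp t1)].
Proof.
have t1_neq0 : t1 != 0 by apply: (form_neq0l (G := G) (y := t1)); frame_lra.
split; first exact: curv_perp_ACT.
- by apply: (spacelike_rank_curv_perp sG uG) => //; frame_lra.
- apply: (curv_perp_not_const sG uG (E0 := plane_mx t1 t2)
    (E1 := plane_mx t2 (2%:R *: t1 + s1))).
  + exact: plane_mx_row0.
  + by apply: (has_signature_plane_neg sG); frame_lra.
  + by apply: (has_signature_plane_neg sG); frame_lra.
  + by not_in_plane t1 s1.
- apply: (curv_perp_not_const sG uG (E0 := plane_mx t1 s1) (E1 := plane_mx t2 s1)).
  + exact: plane_mx_row0.
  + by apply: (has_signature_plane11 sG (a := 1) (b := 0) (c := 0) (d := 1)); frame_lra.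
  + by apply: (has_signature_plane11 sG (a := 1) (b := 0) (c := 0) (d := 1)); frame_lra.
  + by not_in_plane t1 s1.
Qed.

Lemma curv_perp_spacelike :
  [/\ is_ACT (curv_perp s1), timelike_rank G (curv_perp s1) 2,
      ~ const_spacelike_rank G (curv_perp s1) & ~ const_mixed_rank G (curv_perp s1)].
Proof.
have s1_neq0 : s1 != 0 by apply: (form_neq0l (G := G) (y := s1)); frame_lra.
split; first exact: curv_perp_ACT.
- by apply: (timelike_rank_curv_perp sG uG) => //; frame_lra.
- apply: (curv_perp_not_const sG uG (E0 := plane_mx s1 s2)
    (E1 := plane_mx s2 (2%:R *: s1 + t1))).
  + exact: plane_mx_row0.
  + by apply: (has_signature_plane_pos sG); frame_lra.
  + by apply: (has_signature_plane_pos sG); frame_lra.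
  + by not_in_plane s1 t1.
- apply: (curv_perp_not_const sG uG (E0 := plane_mx s1 t1) (E1 := plane_mx t2 s2)).
  + exact: plane_mx_row0.
  + by apply: (has_signature_plane11 sG (a := 0) (b := 1) (c := 1) (d := 0)); frame_lra.
  + by apply: (has_signature_plane11 sG (a := 1) (b := 0) (c := 0) (d := 1)); frame_lra.
  + by not_in_plane s1 t1.
Qed.

Lemma curv_perp_null :
  [/\ is_ACT (curv_perp (t1 + s1)), spacelike_rank G (curv_perp (t1 + s1)) 2,
      timelike_rank G (curv_perp (t1 + s1)) 2 & ~ const_mixed_rank G (curv_perp (t1 + s1))].
Proof.
have t1s1_neq0 : t1 + s1 != 0 by apply: (form_neq0l (G := G) (y := t1)); frame_lra.
split; first exact: curv_perp_ACT.
- by apply: (spacelike_rank_curv_perp sG uG) => //; frame_lra.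
- by apply: (timelike_rank_curv_perp sG uG) => //; frame_lra.
- apply: (curv_perp_not_const sG uG (E0 := plane_mx (t1 + s1) t1) (E1 := plane_mx t2 s1)).
  + exact: plane_mx_row0.
  + by apply: (has_signature_plane11 sG (a := 0) (b := 1) (c := 1) (d := (-1))); frame_lra.
  + by apply: (has_signature_plane11 sG (a := 1) (b := 0) (c := 0) (d := 1)); frame_lra.
  + by not_in_plane t1 s1.
Qed.

End Examples.

Theorem lemma2p2 (R : realType) (n p q : nat) (G : 'M[R]_n) :
  (2 <= p)%N -> (2 <= q)%N -> G^T = G -> has_signature G p q ->
  [/\ exists T, [/\ is_ACT T, spacelike_rank G T 2,
                    ~ const_timelike_rank G T & ~ const_mixed_rank G T],
      exists T, [/\ is_ACT T, timelike_rank G T 2,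
                    ~ const_spacelike_rank G T & ~ const_mixed_rank G T] &
      exists T, [/\ is_ACT T, spacelike_rank G T 2,
                    timelike_rank G T 2 & ~ const_mixed_rank G T]].
Proof.
move=> p_gt1 q_gt1 sG sigG; have uG : G \in unitmx by case: sigG.
have [t1 [t2 [s1 [s2 frame]]]] := orthonormal_frame_exists sG p_gt1 q_gt1 sigG.
split.
- by exists (curv_perp t1); apply: curv_perp_timelike frame.
- by exists (curv_perp s1); apply: curv_perp_spacelike frame.
- by exists (curv_perp (t1 + s1)); apply: curv_perp_null frame.
Qed.
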